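(* Let $C([0,1])$ be the space of continuous real functions on $[0,1]$ with the norm $\|f\|_\infty = \sup_{t\in[0,1]}|f(t)|$ and its Borel $\sigma$-algebra $\mathcal{A}$ (for the norm topology). Let $\{X_{Q,\mathbf{d}} : \Omega \to C([0,1]) \mid \mathbf{d}\in D^n\}$ be a family of measurable maps. For $k\ge1$ and $0\le t_1<\cdots<t_k\le1$ let $\pi_{t_1,\dots,t_k}: C([0,1]) \to \mathbb{R}^k$, $f \mapsto (f(t_1),\dots,f(t_k))$, and $X^{t_1,\dots,t_k}_{Q,\mathbf{d}} = \pi_{t_1,\dots,t_k}\circ X_{Q,\mathbf{d}}$. Let $\epsilon\ge0$, $0\le\delta\le1$. Suppose that for every $k$ and every $t_1<\dots<t_k$ in $[0,1]$, $$\mathbb{P}(X^{t_1,\dots,t_k}_{Q,\mathbf{d}}\in B) \le e^\epsilon\, \mathbb{P}(X^{t_1,\dots,t_k}_{Q,\mathbf{d}'}\in B) + \delta$$ for all $\mathbf{d}\sim\mathbf{d}'$ in $D^n$ and all Borel sets $B\subseteq\mathbb{R}^k$. Then $\mathbb{P}(X_{Q,\mathbf{d}}\in A)\le e^\epsilon\,\mathbb{P}(X_{Q,\mathbf{d}'}\in A)+\delta$ for all $\mathbf{d}\sim\mathbf{d}'$ in $D^n$ and all $A\in\mathcal{A}$.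
   Context: $(U,\rho)$ is a metric space, $D\subseteq U$, $n\ge1$, and $(\Omega,\mathcal{F},\mathbb{P})$ is a probability space. Two databases $\mathbf{d}=(d_1,\dots,d_n), \mathbf{d}'=(d_1',\dots,d_n') \in D^n$ are neighbours, written $\mathbf{d}\sim\mathbf{d}'$, if there is exactly one index $j$ with $d_j \ne d_j'$ (and $d_i = d_i'$ for all $i\ne j$); the relation is symmetric. *)

From HB Require Import structures.
From mathcomp Require Import all_boot all_order all_algebra.
From mathcomp Require Import all_classical all_reals all_analysis.
Set Implicit Arguments. Unset Strict Implicit. Unset Printing Implicit Defensive.
Import Order.TTheory GRing.Theory Num.Theory.
Import numFieldNormedType.Exports.
Local Open Scope classical_set_scope.
Local Open Scope ring_scope.

(* The space C([0,1]) is represented by the set [C01] of functions R -> R that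
   are continuous on [0,1] and constant outside [0,1] (f t = f (clamp t)),
   which is in canonical bijection with C([0,1]) by restriction. *)
Definition clamp01 {R : realType} (t : R) : R := Num.min 1 (Num.max 0 t).

Definition C01 {R : realType} : set (R -> R) :=
  [set f | {within `[0 : R, 1], continuous f} /\ forall t, f t = f (clamp01 t)].

Definition supdist {R : realType} (f g : R -> R) : R :=
  sup [set `|f t - g t| | t in `[0 : R, 1]].

Definition C01_open {R : realType} : set (set (R -> R)) :=
  [set A | A `<=` C01 /\
     forall f, A f -> exists2 e : R, 0 < e &
        forall g, C01 g -> supdist f g < e -> A g].

Definition C01_borel {R : realType} : set (set (R -> R)) :=
  <<s C01, C01_open >>.

Definition Rk_borel {R : realType} (k : nat) : set (set 'rV[R]_k) :=
  <<s [set A : set 'rV[R]_k | open A] >>.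

Definition proj_at {R : realType} (k : nat) (t : 'I_k -> R) (f : R -> R)
  : 'rV[R]_k := \row_i f (t i).

Definition neighbours {U : Type} (n : nat) (d d' : 'I_n -> U) : Prop :=
  exists j : 'I_n, d j <> d' j /\ forall i, i <> j -> d i = d' i.

Definition in_Dn {U : Type} (D : set U) (n : nat) (d : 'I_n -> U) : Prop :=
  forall i, D (d i).

From HB Require Import structures.
From mathcomp Require Import all_boot all_order all_algebra.
From mathcomp Require Import all_classical all_reals all_analysis.
From mathcomp Require Import lra ring.
Import Order.TTheory GRing.Theory Num.Theory.
Import numFieldNormedType.Exports.
Local Open Scope classical_set_scope.
Local Open Scope ring_scope.

(* The cylinder sets [C01 `&` proj_at t @^-1` B] form an algebra on [C01],
   and this algebra generates the Borel sigma-algebra of the sup norm: for a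
   scale [m], a "cell" fixes the values on the grid [i/(N+1)] up to [1/(m+1)]
   and bounds the oscillation between close rational points, so it is a
   countable intersection of cylinders of sup-diameter at most [4/(m+1)];
   countably many cells cover [C01], hence every open set is the union of the
   cells it contains.  The hypothesis gives the inequality on cylinders.  Every
   set of the generated sigma-algebra is approximable by cylinders up to
   arbitrarily small mass (for both laws at once), and the inequality survives
   this approximation. *)

Section relative_g_sigma_algebra.
Context {T : Type} {D : set T} {G : set (set T)}.

Lemma g_sigma_algebraU : setU_closed <<s D, G>>.
Proof.
move=> A B hA hB; rewrite -bigcup2E; apply: sigma_algebra_bigcup => -[|[|n]] //=.
exact: sigma_algebra0.
Qed.

Lemma g_sigma_algebra_ambient : <<s D, G>> D.
Proof. by have := @sigma_algebraCD _ D G _ (@sigma_algebra0 _ D G); rewrite setD0. Qed.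

Hypothesis GD : forall A, G A -> A `<=` D.

Lemma g_sigma_algebra_sub A : <<s D, G>> A -> A `<=` D.
Proof.
apply: (@smallest_sub _ _ _ [set A | A `<=` D]) => //; split => //.
- by move=> A0 _; exact: subDsetl.
- by move=> F HF x [n _ Fx]; exact: (HF n).
Qed.

Let g_sigma_algebra_props := (sigma_algebraP g_sigma_algebra_sub).1
  (smallest_sigma_algebra D G).

Lemma g_sigma_algebraI : setI_closed <<s D, G>>.
Proof. by case: g_sigma_algebra_props. Qed.

Lemma g_sigma_algebraD : setD_closed <<s D, G>>.
Proof. by apply/setD_closedP; case: g_sigma_algebra_props. Qed.

Lemma g_sigma_algebra_bigcap (F : (set T)^nat) :
  (forall n, <<s D, G>> (F n)) -> <<s D, G>> (D `&` \bigcap_n F n).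
Proof.
move=> hF.
have -> : D `&` \bigcap_n F n = D `\` \bigcup_n (D `\` F n).
  apply/seteqP; split => x /=.
    by move=> [Dx Fx]; split => // -[n _ [_ /(_ (Fx n I))]].
  move=> [Dx H]; split => // n _; apply: contrapT => nF.
  by apply: H; exists n.
apply: sigma_algebraCD; apply: sigma_algebra_bigcup => n.
exact: sigma_algebraCD.
Qed.

End relative_g_sigma_algebra.

Section C01_facts.
Context {R : realType}.
Implicit Types (f g : R -> R).

Lemma C01_cvg {f} : C01 f -> forall x, 0 <= x <= 1 ->
  forall e : R, 0 < e -> exists2 d : R, 0 < d &
    forall y, 0 <= y <= 1 -> `|x - y| < d -> `|f x - f y| < e.
Proof.
move=> [cf _] x x01 e e0.
have /(_ _)/cvgrPdist_lt/(_ e e0) := (subspace_continuousP _ f).1 cf x.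
rewrite /= in_itv x01 => /(_ isT); rewrite near_withinE => /nbhs_ballP [d d0 Hd].
by exists d => // y y01 xy; apply: Hd; rewrite //= in_itv.
Qed.

Lemma C01_bounded {f} : C01 f -> exists M : R, forall t, 0 <= t <= 1 -> `|f t| <= M.
Proof.
move=> [cf _].
have /compact_bounded [M [_ HM]] := continuous_compact cf (@segment_compact _ 0 1).
exists (M + 1) => t t01; apply: (HM (M + 1)); first lra.
by exists t; rewrite //= in_itv.
Qed.

Lemma C01_unif_cont {f} : C01 f -> forall e : R, 0 < e ->
  exists N : nat, forall s t, 0 <= s <= 1 -> 0 <= t <= 1 ->
    `|s - t| < N.+1%:R^-1 -> `|f s - f t| < e.
Proof.
move=> cf e e0.
have cK : compact `[(0 : R), 1] by exact: segment_compact.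
have := (near_covering_withinP _).2 ((compact_near_coveringP _).1 cK).
move=> /(_ nat \oo (fun N s => forall t, 0 <= t <= 1 ->
    `|s - t| < N.+1%:R^-1 -> `|f s - f t| < e) _) [x Kx|M _ HM]; last first.
  by exists M => s t s01; apply: (HM M (leqnn _)); rewrite /= in_itv.
rewrite /= in_itv /= in Kx.
have [d d0 Hd] := C01_cvg cf x Kx (e / 2) ltac:(by rewrite divr_gt0).
have d20 : 0 < d / 2 by rewrite divr_gt0.
have [M _ HM] := near_infty_natSinv_lt (PosNum d20).
exists (ball x (d / 2), [set N | (M <= N)%N]).
  by split; [exact: nbhsx_ballx | exists M].
move=> [x' N] [/= bx' MN] Kx' t t01 x't; rewrite /= in_itv /= in Kx'.
have hN := HM N MN; move: bx'; rewrite /ball /= => bx'.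
have h1 := Hd x' Kx' ltac:(lra).
have h2 : `|f x - f t| < e / 2.
  apply: Hd => //; apply: le_lt_trans (ler_distD x' _ _) _.
  rewrite [d](splitr d); apply: ltrD => //; exact: lt_trans x't hN.
by apply: le_lt_trans (ler_distD (f x) _ _) _; rewrite distrC; lra.
Qed.

Lemma ler_supdist f g t : C01 f -> C01 g -> 0 <= t <= 1 ->
  `|f t - g t| <= supdist f g.
Proof.
move=> cf cg t01.
have [M1 H1] := C01_bounded cf; have [M2 H2] := C01_bounded cg.
apply: ub_le_sup; last by exists t => //; rewrite /= in_itv.
exists (M1 + M2) => _ [s s01 <-]; rewrite /= in_itv in s01.
apply: le_trans (ler_normB _ _) _; exact: lerD (H1 _ s01) (H2 _ s01).
Qed.

Lemma supdist_le f g (r : R) :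
  (forall t, 0 <= t <= 1 -> `|f t - g t| <= r) -> supdist f g <= r.
Proof.
move=> H; apply: ge_sup.
  by exists `|f 0 - g 0|, 0 => //; rewrite /= in_itv /= lexx ler01.
by move=> _ [s s01 <-]; apply: H; rewrite /= in_itv in s01.
Qed.

End C01_facts.

Section Rk_borel_facts.
Context {R : realType}.

Lemma Rk_borel_continuous_preimage a b (phi : 'rV[R]_a -> 'rV[R]_b)
  (B : set 'rV[R]_b) : continuous phi -> Rk_borel B -> Rk_borel (phi @^-1` B).
Proof.
move=> cphi; apply: (@smallest_sub _ _ _ [set B | Rk_borel (phi @^-1` B)]).
- split => [|A HA|F HF] /=.
  + by rewrite preimage_set0; exact: sigma_algebra0.
  + by rewrite setTD preimage_setC -setTD; exact: sigma_algebraCD.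
  + by rewrite preimage_bigcup; exact: sigma_algebra_bigcup.
- move=> A oA; apply: sub_sigma_algebra => /=.
  by apply: open_comp => // x _; exact: cphi.
Qed.

Lemma Rk_borel_le k (phi : 'rV[R]_k -> R) (c : R) :
  continuous phi -> Rk_borel [set v | phi v <= c].
Proof.
move=> cphi.
have -> : [set v | phi v <= c] = setT `\` (phi @^-1` [set y | c < y]).
  by apply/seteqP; split => v /=; rewrite leNgt; [move/negP|case=> _ /negP].
apply: sigma_algebraCD; apply: sub_sigma_algebra.
by apply: open_comp => [x _|]; [exact: cphi | exact: open_gt].
Qed.

Lemma colsub_continuous k k' (r : 'I_k -> 'I_k') :
  continuous (colsub r : 'rV[R]_k' -> 'rV[R]_k).
Proof.
move=> v A /nbhs_ballP [e e0 HA]; apply/nbhs_ballP; exists e => // w [_ Hw].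
by apply: HA; split => // i j; rewrite !mxE; exact: Hw.
Qed.

Lemma proj_at_colsub k k' (t : 'I_k -> R) (t' : 'I_k' -> R)
  (r : 'I_k -> 'I_k') : (forall i, t i = t' (r i)) ->
  forall f, proj_at t f = colsub r (proj_at t' f).
Proof. by move=> h f; apply/matrixP => i j; rewrite !mxE h. Qed.

End Rk_borel_facts.

Section cylinder_sets.
Context {R : realType}.

Definition cyl : set (set (R -> R)) :=
  [set A | exists k (t : 'I_k -> R) (B : set 'rV[R]_k),
    [/\ (0 < k)%N, (forall i, 0 <= t i <= 1), Rk_borel B &
        A = C01 `&` (proj_at t @^-1` B)]].

Lemma cyl_sub A : cyl A -> A `<=` C01.
Proof. by move=> [k [t [B [_ _ _ ->]]]] x []. Qed.

Lemma cyl0 : cyl set0.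
Proof.
exists 1%N, (fun=> 0), set0; split => //.
- by move=> _; rewrite lexx ler01.
- exact: sigma_algebra0.
- by rewrite preimage_set0 setI0.
Qed.

Lemma cylCD A : cyl A -> cyl (C01 `\` A).
Proof.
move=> [k [t [B [k0 t01 hB ->]]]]; exists k, t, (setT `\` B); split => //.
  exact: sigma_algebraCD.
apply/seteqP; split => f /=.
  by move=> [Cf /not_andP [//|nB]]; split.
by move=> [Cf [_ nB]]; split => // -[].
Qed.

Lemma cylU : setU_closed cyl.
Proof.
move=> _ _ [k [t [B [k0 t01 hB ->]]]] [k' [t' [B' [k0' t01' hB' ->]]]].
pose T i := match fintype.split i with inl a => t a | inr b => t' b end.
have eT f : proj_at t f = colsub (@lshift k k') (proj_at T f) /\
            proj_at t' f = colsub (@rshift k k') (proj_at T f).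
  split; apply: proj_at_colsub => i; rewrite /T.
    by have /= -> := unsplitK (inl i : 'I_k + 'I_k').
  by have /= -> := unsplitK (inr i : 'I_k + 'I_k').
exists (k + k')%N, T,
  (colsub (@lshift k k') @^-1` B `|` colsub (@rshift k k') @^-1` B'); split.
- by rewrite addn_gt0 k0.
- by move=> i; rewrite /T; case: fintype.split.
- by apply: g_sigma_algebraU; apply: Rk_borel_continuous_preimage => //;
    exact: colsub_continuous.
apply/seteqP; split => f /=; have [-> ->] := eT f.
  by case=> -[Cf Bf]; split => //; [left|right].
by case=> Cf [Bf|Bf]; [left|right].
Qed.

Lemma cyl_le k (t : 'I_k -> R) (phi : 'rV[R]_k -> R) c :
  (0 < k)%N -> (forall i, 0 <= t i <= 1) -> continuous phi ->
  cyl (C01 `&` [set g | phi (proj_at t g) <= c]).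
Proof.
move=> k0 t01 cphi; exists k, t, [set v | phi v <= c]; split => //.
exact: Rk_borel_le.
Qed.

Lemma cyl_point_le (x c r : R) : 0 <= x <= 1 ->
  cyl (C01 `&` [set g | `|g x - c| <= r]).
Proof.
move=> x01.
have -> : [set g | `|g x - c| <= r] =
    [set g | `|proj_at (fun _ : 'I_1 => x) g ord0 ord0 - c| <= r].
  by apply/seteqP; split => g; rewrite /= mxE.
apply: (cyl_le _ _ (fun v : 'rV[R]_1 => `|v ord0 ord0 - c|)) => // v.
apply: (continuous_comp (f := fun v : 'rV[R]_1 => v ord0 ord0 - c) (g := Num.norm)).
  by apply: continuousB; [exact: coord_continuous | exact: cst_continuous].
exact: norm_continuous.
Qed.

Lemma cyl_pair_le (x y r : R) : 0 <= x <= 1 -> 0 <= y <= 1 ->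
  cyl (C01 `&` [set g | `|g x - g y| <= r]).
Proof.
move=> x01 y01; pose t (i : 'I_2) := if i == ord0 then x else y.
have -> : [set g | `|g x - g y| <= r] =
    [set g | `|proj_at t g ord0 ord0 - proj_at t g ord0 ord_max| <= r].
  by apply/seteqP; split => g; rewrite /= !mxE.
apply: (cyl_le _ _ (fun v : 'rV[R]_2 => `|v ord0 ord0 - v ord0 ord_max|)) => [//|i|v].
  by rewrite /t; case: ifP.
apply: (continuous_comp (f := fun v : 'rV[R]_2 => v ord0 ord0 - v ord0 ord_max)
  (g := Num.norm)); last exact: norm_continuous.
by apply: continuousB; exact: coord_continuous.
Qed.

Lemma cyl_C01_borel A : cyl A -> C01_borel A.
Proof.
move=> [k [t [B [k0 t01 hB ->]]]].
apply: (@smallest_sub _ _ _ [set B | C01_borel (C01 `&` (proj_at t @^-1` B))]) hB.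
- split => [|A0 HA|F HF] /=.
  + by rewrite preimage_set0 setI0; exact: sigma_algebra0.
  + rewrite (_ : _ `&` _ = C01 `\` (C01 `&` proj_at t @^-1` A0)).
      exact: sigma_algebraCD.
    by rewrite setDIr setDv set0U setTD preimage_setC setDE.
  + by rewrite preimage_bigcup setI_bigcupr; exact: sigma_algebra_bigcup.
- move=> O oO; apply: sub_sigma_algebra; split => [f []//|f [Cf Of]].
  have /nbhs_ballP [e e0 He] := oO _ Of.
  exists e => // g Cg fg; split => //; apply: He; split => // i j.
  by rewrite /ball /= !mxE; apply: le_lt_trans fg; exact: ler_supdist.
Qed.

End cylinder_sets.

Section cells.
Context {R : realType}.
Implicit Types (f g : R -> R) (N m : nat) (zs : seq int).

Lemma truncn_grid {t : R} {D : nat} : 0 <= t <= 1 -> (0 < D)%N ->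
  [/\ (Num.truncn (t * D%:R) <= D)%N,
      (Num.truncn (t * D%:R))%:R / D%:R <= t &
      t < (Num.truncn (t * D%:R))%:R / D%:R + D%:R^-1].
Proof.
move=> /andP [t0 t1] D0; have D0' : 0 < D%:R :> R by rewrite ltr0n.
have h1 := truncnS_gt (t * D%:R).
have h2 : (Num.truncn (t * D%:R))%:R <= t * D%:R by rewrite truncn_le mulr_ge0.
split.
- rewrite truncn_le_nat; apply: le_lt_trans (_ : t * D%:R <= D%:R) _.
    by rewrite ler_piMl.
  by rewrite ltr_nat.
- by rewrite ler_pdivrMr.
- rewrite -[X in _ + X]mul1r -mulrDl ltr_pdivlMr //; move: h1; rewrite -natr1; lra.
Qed.

Lemma grid_in01 (j D : nat) : (0 < D)%N -> (j <= D)%N -> 0 <= (j%:R / D%:R : R) <= 1.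
Proof. by move=> D0 jD; rewrite divr_ge0 //= ler_pdivrMr ?ltr0n // mul1r ler_nat. Qed.

Definition grid_fit N m zs g := forall i, (i <= N.+1)%N ->
  `|g (i%:R / N.+1%:R) - (nth 0 zs i)%:~R / m.+1%:R| <= m.+1%:R^-1.

Definition grid_osc N m g := forall D j1 j2 : nat,
  (0 < D)%N -> (j1 <= D)%N -> (j2 <= D)%N ->
  `|(j1%:R / D%:R : R) - j2%:R / D%:R| < N.+1%:R^-1 ->
  `|g (j1%:R / D%:R) - g (j2%:R / D%:R)| <= m.+1%:R^-1.

Definition cell N m zs : set (R -> R) :=
  C01 `&` [set g | grid_fit N m zs g /\ grid_osc N m g].

(* Approximate [t] by a point of a grid refining both [1/(N+1)] and the
   continuity modulus of [g] at [t]. *)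
Lemma grid_osc_floor {g N m} {t : R} : C01 g -> grid_osc N m g -> 0 <= t <= 1 ->
  (Num.truncn (t * N.+1%:R) <= N.+1)%N /\
  `|g t - g ((Num.truncn (t * N.+1%:R))%:R / N.+1%:R)| <= m.+1%:R^-1.
Proof.
move=> Cg osc t01; have [iN xi_le lt_xi] := truncn_grid t01 (ltn0Sn N).
split => //; set i := Num.truncn _ in iN xi_le lt_xi *.
apply/ler_addgt0Pr => eta eta0.
have [d d0 Hd] := C01_cvg Cg t t01 eta eta0.
have [K _ /(_ K (leqnn _)) /= hK] := near_infty_natSinv_lt (PosNum d0).
pose D := (N.+1 * K.+1)%N; have D0 : (0 < D)%N by rewrite muln_gt0.
have [jD a_le lt_a] := truncn_grid t01 D0; set j := Num.truncn _ in jD a_le lt_a *.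
have xiE : i%:R / N.+1%:R = (i * K.+1)%:R / D%:R :> R.
  by rewrite /D !natrM; field; rewrite !(addrC 1) !natr1 !pnatr_eq0.
have iD : (i * K.+1 <= D)%N by rewrite /D leq_mul2r iN orbT.
have invD : D%:R^-1 <= K.+1%:R^-1 :> R.
  by rewrite lef_pV2 ?posrE ?ltr0n ?muln_gt0 // ler_nat /D leq_pmull.
have invDN : D%:R^-1 <= N.+1%:R^-1 :> R.
  by rewrite lef_pV2 ?posrE ?ltr0n ?muln_gt0 // ler_nat /D leq_pmulr.
clearbody i j D.
have h1 : `|g t - g (j%:R / D%:R)| < eta.
  apply: Hd; first exact: grid_in01.
  rewrite ger0_norm ?subr_ge0 // ltrBlDl; apply: (lt_le_trans lt_a).
  by rewrite lerD2l; exact: ltW (le_lt_trans invD hK).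
have h2 : `|g (j%:R / D%:R) - g ((i * K.+1)%:R / D%:R)| <= m.+1%:R^-1.
  apply: osc => //; rewrite -xiE ltr_norml.
  move: lt_a a_le xi_le lt_xi invDN.
  move: (j%:R / D%:R : R) (i%:R / N.+1%:R : R) (D%:R^-1 : R) (N.+1%:R^-1 : R).
  move=> a b c e *.
  by apply/andP; split; lra.
rewrite xiE; apply: le_trans (ler_distD (g (j%:R / D%:R)) _ _) _.
by rewrite addrC; apply: lerD => //; exact: ltW.
Qed.

Lemma cell_close {N m zs f g} : cell N m zs f -> cell N m zs g ->
  forall t : R, 0 <= t <= 1 -> `|f t - g t| <= 4 * m.+1%:R^-1.
Proof.
move=> [Cf [fitf oscf]] [Cg [fitg oscg]] t t01.
have [iN hf] := grid_osc_floor Cf oscf t01; have [_ hg] := grid_osc_floor Cg oscg t01.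
move: hf hg (fitf _ iN) (fitg _ iN).
set xi := (_ / N.+1%:R); set q := ((nth 0 zs _)%:~R / _).
move=> hf hg h1 h2.
have -> : f t - g t = (f t - f xi) + (f xi - q) - (g xi - q) - (g t - g xi) by ring.
have := ler_normB (f t - f xi + (f xi - q) - (g xi - q)) (g t - g xi).
have := ler_normB (f t - f xi + (f xi - q)) (g xi - q).
have := ler_normD (f t - f xi) (f xi - q).
move: (m.+1%:R^-1 : R) hf hg h1 h2 => r; lra.
Qed.

Lemma cell_cover {f} m : C01 f -> exists N zs, cell N m zs f.
Proof.
move=> Cf; have m0 : 0 < m.+1%:R :> R by rewrite ltr0n.
have [N HN] := C01_unif_cont Cf (m.+1%:R^-1) ltac:(by rewrite invr_gt0).
exists N, [seq Num.floor (f (i%:R / N.+1%:R) * m.+1%:R) | i <- iota 0 N.+2].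
split => //; split => [i iN|D j1 j2 D0 j1D j2D hj]; last first.
  by apply/ltW/HN => //; exact: grid_in01.
rewrite (nth_map 0%N) ?size_iota // nth_iota // add0n.
set y := f _; have := floor_le (y * m.+1%:R); have := floorD1_gt (y * m.+1%:R).
rewrite intrD; move: (Num.floor _) => z h2 h1.
have e1 : z%:~R / m.+1%:R <= y by rewrite ler_pdivrMr.
have e2 : y < z%:~R / m.+1%:R + m.+1%:R^-1.
  by rewrite -[X in _ + X]mul1r -mulrDl ltr_pdivlMr.
rewrite ler_norml; move: e1 e2; move: (z%:~R / m.+1%:R : R) (m.+1%:R^-1 : R).
by move=> a b e1 e2; apply/andP; split; lra.
Qed.

Lemma cell_g_sigma_cyl N m zs : <<s C01, cyl>> (cell N m zs).
Proof.
pose F1 (i : nat) : set (R -> R) := if (i <= N.+1)%N then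
  C01 `&` [set g | `|g (i%:R / N.+1%:R) - (nth 0 zs i)%:~R / m.+1%:R| <= m.+1%:R^-1]
  else C01.
pose F2 (n : nat) : set (R -> R) := if @unpickle (nat * nat * nat)%type n
  is Some (D, j1, j2) then
    if [&& (0 < D)%N, (j1 <= D)%N, (j2 <= D)%N &
         `|(j1%:R / D%:R : R) - j2%:R / D%:R| < N.+1%:R^-1] then
      C01 `&` [set g | `|g (j1%:R / D%:R) - g (j2%:R / D%:R)| <= m.+1%:R^-1]
    else C01
  else C01.
have -> : cell N m zs = (C01 `&` \bigcap_i F1 i) `&` (C01 `&` \bigcap_n F2 n).
  apply/seteqP; split => g.
    move=> [Cg [fit osc]]; split; split => // n _.
      by rewrite /F1; case: ifP => // iN; split => //; exact: fit.
    rewrite /F2; case: (unpickle n) => [[[D j1] j2]|] //.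
    by case: ifP => // /and4P [D0 j1D j2D h]; split => //; exact: osc.
  move=> [[Cg H1] [_ H2]]; split => //; split.
    by move=> i iN; have := H1 i I; rewrite /F1 iN; case.
  move=> D j1 j2 D0 j1D j2D h; have := H2 (pickle (D, j1, j2)) I.
  by rewrite /F2 pickleK D0 j1D j2D h /=; case.
apply: g_sigma_algebraI; [exact: cyl_sub| |]; apply: g_sigma_algebra_bigcap.
- move=> i; rewrite /F1; case: ifP => iN; last exact: g_sigma_algebra_ambient.
  by apply: sub_sigma_algebra; apply: cyl_point_le; exact: grid_in01.
- move=> n; rewrite /F2; case: (unpickle n) => [[[D j1] j2]|];
    last exact: g_sigma_algebra_ambient.
  case: ifP => [/and4P [D0 j1D j2D _]|_]; last exact: g_sigma_algebra_ambient.
  by apply: sub_sigma_algebra; apply: cyl_pair_le; exact: grid_in01.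
Qed.

End cells.

Lemma C01_open_g_sigma_cyl {R : realType} (A : set (R -> R)) :
  C01_open A -> <<s C01, cyl>> A.
Proof.
move=> [AC oA].
pose H n : set (R -> R) := if @unpickle (nat * nat * seq int)%type n is Some (N, m, zs)
  then if pselect (cell N m zs `<=` A) then cell N m zs else set0 else set0.
have -> : A = \bigcup_n H n.
  apply/seteqP; split => [f Af|f [n _]]; last first.
    by rewrite /H; case: (unpickle n) => [[[N m] zs]|] //; case: pselect => // HS /HS.
  have [e e0 He] := oA f Af.
  have e40 : 0 < e / 4 by rewrite divr_gt0.
  have [m _ /(_ m (leqnn _)) /= hm] := near_infty_natSinv_lt (PosNum e40).
  have [N [zs Sf]] := cell_cover m (AC _ Af).
  have sub : cell N m zs `<=` A.
    move=> g Sg; apply: He; first exact: Sg.1.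
    apply: le_lt_trans (_ : 4 * m.+1%:R^-1 < e).
      by apply: supdist_le; exact: cell_close Sf Sg.
    by move: (m.+1%:R^-1 : R) hm => r; lra.
  by exists (pickle (N, m, zs)) => //; rewrite /H pickleK; case: pselect.
apply: sigma_algebra_bigcup => n; rewrite /H.
case: (unpickle n) => [[[N m] zs]|]; last exact: sigma_algebra0.
by case: pselect => HS; [exact: cell_g_sigma_cyl | exact: sigma_algebra0].
Qed.

Lemma C01_borelE {R : realType} : C01_borel = <<s C01, @cyl R>>.
Proof.
apply/seteqP; split; apply: smallest_sub.
- exact: smallest_sigma_algebra.
- by move=> A; exact: C01_open_g_sigma_cyl.
- exact: smallest_sigma_algebra.
- by move=> A; exact: cyl_C01_borel.
Qed.

Lemma setDUU_sub {T : Type} (A1 A2 C1 C2 : set T) :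
  (A1 `|` A2) `\` (C1 `|` C2) `<=` (A1 `\` C1) `|` (A2 `\` C2).
Proof. by move=> x [[A1x|A2x] /not_orP [nC1 nC2]]; [left|right]. Qed.

Lemma subset_setUD {T : Type} (A C : set T) : A `<=` C `|` (A `\` C).
Proof. by move=> x Ax; have [Cx|nCx] := pselect (C x); [left|right]. Qed.

Section real_law.
Context {R : realType} {T : Type} {dO : measure_display} {Omega : measurableType dO}.
Variables (P : probability Omega R) (X : Omega -> T).
Implicit Types A B : set T.

Definition pr A : R := fine (P (X @^-1` A)).

Lemma prE {A} : measurable (X @^-1` A) -> P (X @^-1` A) = (pr A)%:E.
Proof.
move=> mA; rewrite /pr fineK // ge0_fin_numE ?measure_ge0 //.
by apply: le_lt_trans (probability_le1 P mA) _; exact: ltey.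
Qed.

Lemma pr_ge0 A : 0 <= pr A.
Proof. by rewrite /pr fine_ge0 // measure_ge0. Qed.

Lemma pr0 : pr set0 = 0.
Proof. by rewrite /pr preimage_set0 measure0. Qed.

Lemma le_pr {A B} : measurable (X @^-1` A) -> measurable (X @^-1` B) -> A `<=` B ->
  pr A <= pr B.
Proof.
move=> mA mB AB; rewrite -lee_fin -!prE //.
by apply: le_measure; rewrite ?inE //; exact: preimage_subset.
Qed.

Lemma pr_setU_le {A B} : measurable (X @^-1` A) -> measurable (X @^-1` B) ->
  pr (A `|` B) <= pr A + pr B.
Proof.
move=> mA mB; have mAB : measurable (X @^-1` (A `|` B)).
  by rewrite preimage_setU; exact: measurableU.
by rewrite -lee_fin EFinD -!prE // preimage_setU; exact: measureU2.
Qed.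

Lemma pr_nonincreasing_cvg0 {F : (set T)^nat} :
  (forall n, measurable (X @^-1` F n)) -> {homo F : n m / (n <= m)%N >-> m `<=` n} ->
  \bigcap_n F n = set0 ->
  forall e : R, 0 < e -> exists N0, forall N, (N0 <= N)%N -> pr (F N) < e.
Proof.
move=> mF dF F0 e e0.
have P0 : (P (X @^-1` F 0%N) < +oo)%E.
  by apply: le_lt_trans (probability_le1 P (mF 0%N)) _; exact: ltey.
have mcap : measurable (\bigcap_n (X @^-1` F n)).
  by rewrite -preimage_bigcap F0 preimage_set0; exact: measurable0.
have ndF : nonincreasing_seq (fun n => X @^-1` F n).
  by move=> n m nm; apply/subsetPset; apply: preimage_subset; exact: dF.
have := nonincreasing_cvg_mu P0 mF mcap ndF.
rewrite -preimage_bigcap F0 preimage_set0 measure0 => /fine_cvg.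
by move=> /cvgr_lt /(_ e e0) [N0 _ HN]; exists N0.
Qed.

End real_law.

Section approximation_by_an_algebra.
Context {R : realType} {T : Type} {D : set T} {alg : set (set T)}.
Hypotheses (alg_sub : forall A, alg A -> A `<=` D) (alg0 : alg set0)
  (algCD : forall A, alg A -> alg (D `\` A)) (algU : setU_closed alg).
Context {dO : measure_display} {Omega : measurableType dO}.
Variables (P : probability Omega R) (X X' : Omega -> T).
Hypotheses (mX : forall A, <<s D, alg>> A -> measurable (X @^-1` A))
  (mX' : forall A, <<s D, alg>> A -> measurable (X' @^-1` A)).

Let mu A := pr P X A + pr P X' A.

Let le_mu {A B} : <<s D, alg>> A -> <<s D, alg>> B -> A `<=` B -> mu A <= mu B.
Proof. by move=> hA hB AB; apply: lerD; apply: le_pr; auto. Qed.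

Let mu_setU_le {A B} : <<s D, alg>> A -> <<s D, alg>> B -> mu (A `|` B) <= mu A + mu B.
Proof.
move=> hA hB; rewrite /mu.
have := pr_setU_le P X (mX _ hA) (mX _ hB).
have := pr_setU_le P X' (mX' _ hA) (mX' _ hB).
lra.
Qed.

Let sigma_alg {A} : alg A -> <<s D, alg>> A := @sub_sigma_algebra _ D alg A.
Let sigmaD {A B} : <<s D, alg>> A -> <<s D, alg>> B -> <<s D, alg>> (A `\` B) :=
  g_sigma_algebraD alg_sub A B.
Let sigmaU {A B} : <<s D, alg>> A -> <<s D, alg>> B -> <<s D, alg>> (A `|` B) :=
  g_sigma_algebraU A B.

Definition approximable A := <<s D, alg>> A /\
  forall e : R, 0 < e -> exists2 C, alg C & mu (A `\` C) + mu (C `\` A) < e.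

Lemma approximable_alg A : alg A -> approximable A.
Proof.
move=> algA; split; first exact: sigma_alg.
by move=> e e0; exists A => //; rewrite setDv /mu !pr0 !addr0.
Qed.

Lemma approximable_bigsetU {A : (set T)^nat} : (forall n, approximable (A n)) ->
  forall N, approximable (\big[setU/set0]_(i < N) A i).
Proof.
move=> hA; elim=> [|N [hU IH]]; first by rewrite big_ord0; exact: approximable_alg.
have [hAN apxN] := hA N; rewrite big_ord_recr /=.
split => [|e e0]; first exact: sigmaU.
have e20 : 0 < e / 2 by rewrite divr_gt0.
have [C1 c1 h1] := IH _ e20; have [C2 c2 h2] := apxN _ e20.
have [hC1 hC2] := (sigma_alg c1, sigma_alg c2).
exists (C1 `|` C2); first exact: algU.
have s1 := le_mu (sigmaD (sigmaU hU hAN) (sigmaU hC1 hC2))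
  (sigmaU (sigmaD hU hC1) (sigmaD hAN hC2)) (setDUU_sub _ _ _ _).
have s2 := le_mu (sigmaD (sigmaU hC1 hC2) (sigmaU hU hAN))
  (sigmaU (sigmaD hC1 hU) (sigmaD hC2 hAN)) (setDUU_sub _ _ _ _).
have := mu_setU_le (sigmaD hU hC1) (sigmaD hAN hC2).
have := mu_setU_le (sigmaD hC1 hU) (sigmaD hC2 hAN).
lra.
Qed.

Lemma approximableCD A : approximable A -> approximable (D `\` A).
Proof.
move=> [hA apx]; split => [|e e0]; first exact: sigma_algebraCD.
have [C algC apxC] := apx e e0; have hC := sigma_alg algC.
exists (D `\` C); first exact: algCD.
have hDA := sigma_algebraCD hA; have hDC := sigma_algebraCD hC.
have l1 : mu ((D `\` A) `\` (D `\` C)) <= mu (C `\` A).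
  apply: le_mu; [exact: sigmaD|exact: sigmaD|].
  by move=> x [[Dx nA] /not_andP [|/contrapT]].
have l2 : mu ((D `\` C) `\` (D `\` A)) <= mu (A `\` C).
  apply: le_mu; [exact: sigmaD|exact: sigmaD|].
  by move=> x [[Dx nC] /not_andP [|/contrapT]].
lra.
Qed.

Lemma approximable_bigcup (A : (set T)^nat) : (forall n, approximable (A n)) ->
  approximable (\bigcup_n A n).
Proof.
move=> hA; have hAn n : <<s D, alg>> (A n) := (hA n).1.
have hU : <<s D, alg>> (\bigcup_n A n) by exact: sigma_algebra_bigcup.
have hF N : <<s D, alg>> (\big[setU/set0]_(i < N) A i).
  exact: (approximable_bigsetU hA N).1.
split => // e e0.
pose tail N := \bigcup_n A n `\` \big[setU/set0]_(i < N) A i.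
have htail N : <<s D, alg>> (tail N) := sigmaD hU (hF N).
have tail_dec : {homo tail : n m / (n <= m)%N >-> m `<=` n}.
  by move=> n m nm x [Ux nU]; split => // Bx; apply: nU; exact: (subset_bigsetU nm).
have tail0 : \bigcap_n tail n = set0.
  apply/seteqP; split => x // tx; have [n _ Anx] := (tx 0%N I).1.
  by have [_] := tx n.+1 I; apply; rewrite big_ord_recr /=; right.
have e40 : 0 < e / 4 by rewrite divr_gt0.
have [N1 H1] :=
  pr_nonincreasing_cvg0 P X (fun n => mX _ (htail n)) tail_dec tail0 _ e40.
have [N2 H2] :=
  pr_nonincreasing_cvg0 P X' (fun n => mX' _ (htail n)) tail_dec tail0 _ e40.
pose N := maxn N1 N2.
have [C algC apxC] := (approximable_bigsetU hA N).2 (e / 2) ltac:(by rewrite divr_gt0).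
have hC := sigma_alg algC; exists C => //.
have l1 : mu (\bigcup_n A n `\` C) <=
          mu (tail N) + mu (\big[setU/set0]_(i < N) A i `\` C).
  apply: le_trans (mu_setU_le (htail N) (sigmaD (hF N) hC)).
  apply: le_mu; [exact: sigmaD|exact: sigmaU (htail N) (sigmaD (hF N) hC)|].
  move=> x [Ux nC]; have [UNx|nUN] := pselect ((\big[setU/set0]_(i < N) A i) x).
    by right.
  by left.
have l2 : mu (C `\` \bigcup_n A n) <= mu (C `\` \big[setU/set0]_(i < N) A i).
  apply: le_mu; [exact: sigmaD|exact: sigmaD|].
  by move=> x [Cx nU]; split => // Bx; apply/nU/bigsetU_bigcup/Bx.
have := H1 N (leq_maxl _ _); have := H2 N (leq_maxr _ _).
rewrite /mu in l1 l2 apxC *; lra.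
Qed.

Lemma approximable_sigma_algebra : sigma_algebra D approximable.
Proof.
split; [exact: approximable_alg|exact: approximableCD|exact: approximable_bigcup].
Qed.

Lemma g_sigma_approximable : <<s D, alg>> `<=` approximable.
Proof.
apply: smallest_sub; first exact: approximable_sigma_algebra.
by move=> A; exact: approximable_alg.
Qed.

Lemma g_sigma_le_alg (c delta : R) : 0 <= c ->
  (forall C, alg C ->
     (P (X @^-1` C) <= c%:E * P (X' @^-1` C) + delta%:E)%E) ->
  forall A, <<s D, alg>> A ->
     (P (X @^-1` A) <= c%:E * P (X' @^-1` A) + delta%:E)%E.
Proof.
move=> c0 halg A hA; have [_ apx] := g_sigma_approximable _ hA.
rewrite (prE P X (mX _ hA)) (prE P X' (mX' _ hA)) -EFinM -EFinD lee_fin.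
apply/ler_addgt0Pr => eta eta0.
have c10 : 0 < c + 1 by lra.
have [C algC apxC] := apx (eta / (c + 1)) ltac:(by rewrite divr_gt0).
have hC := sigma_alg algC.
have := halg C algC.
rewrite (prE P X (mX _ hC)) (prE P X' (mX' _ hC)) -EFinM -EFinD lee_fin.
have l1 : pr P X A <= pr P X C + pr P X (A `\` C).
  apply: le_trans (pr_setU_le P X (mX _ hC) (mX _ (sigmaD hA hC))).
  by apply: (le_pr P X (mX _ hA) (mX _ (sigmaU hC (sigmaD hA hC)))
    (subset_setUD A C)).
have l2 : pr P X' C <= pr P X' A + pr P X' (C `\` A).
  apply: le_trans (pr_setU_le P X' (mX' _ hA) (mX' _ (sigmaD hC hA))).
  by apply: (le_pr P X' (mX' _ hC) (mX' _ (sigmaU hA (sigmaD hC hA)))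
    (subset_setUD C A)).
have := pr_ge0 P X (A `\` C); have := pr_ge0 P X' (C `\` A).
have := pr_ge0 P X (C `\` A); have := pr_ge0 P X' (A `\` C).
have -> : eta = (c + 1) * (eta / (c + 1)) by rewrite mulrC divfK ?gt_eqF.
rewrite /mu in apxC; nra.
Qed.

End approximation_by_an_algebra.

(* Sorting and deduplicating the times of a cylinder reduces it to one with
   strictly increasing times, through a continuous coordinate selection. *)
Lemma cyl_le_of_marginals {R : realType} {dO : measure_display}
  {Omega : measurableType dO} (P : probability Omega R) (X X' : Omega -> R -> R)
  (XC : forall w, C01 (X w)) (XC' : forall w, C01 (X' w)) (c delta : R) :
  (forall k (t : 'I_k -> R), (1 <= k)%N -> (forall i, 0 <= t i <= 1) ->
     (forall i j : 'I_k, (i < j)%N -> t i < t j) -> forall B, Rk_borel B ->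
     (P ((proj_at t \o X) @^-1` B)
        <= c%:E * P ((proj_at t \o X') @^-1` B) + delta%:E)%E) ->
  forall A, cyl A ->
  (P (X @^-1` A) <= c%:E * P (X' @^-1` A) + delta%:E)%E.
Proof.
move=> H _ [k [t [B [k0 t01 hB ->]]]].
have preE (Y : Omega -> R -> R) : (forall w, C01 (Y w)) ->
    Y @^-1` (C01 `&` proj_at t @^-1` B) = (proj_at t \o Y) @^-1` B.
  by move=> YC; apply/seteqP; split => w /=; [case | split].
rewrite (preE X XC) (preE X' XC').
pose s := sort <=%O (undup [seq t i | i <- enum 'I_k]).
have s_sorted : sorted <%O s by rewrite sort_lt_sorted undup_uniq.
have mem_s i : t i \in s.
  by rewrite mem_sort mem_undup; apply: map_f; rewrite mem_enum.
have memP x : x \in s -> exists i, x = t i.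
  by rewrite mem_sort mem_undup => /mapP [i _ ->]; exists i.
have idx i : (index (t i) s < size s)%N by rewrite index_mem.
pose r i := Ordinal (idx i); pose t' (i : 'I_(size s)) := nth 0 s i.
have tE (Y : Omega -> R -> R) : proj_at t \o Y = colsub r \o (proj_at t' \o Y).
  by apply: funext => w /=; apply: proj_at_colsub => i; rewrite /t' /= nth_index.
rewrite (tE X) (tE X'); apply: (H (size s) t' _ _ _ (colsub r @^-1` B)).
- exact: leq_ltn_trans (leq0n _) (idx (Ordinal k0)).
- by move=> i; have [j ->] := memP (t' i) (mem_nth _ (ltn_ord i)).
- by move=> i j ij; apply: (sorted_ltn_nth lt_trans 0 s_sorted); rewrite ?inE.
- by apply: Rk_borel_continuous_preimage => //; exact: colsub_continuous.
Qed.

Theorem mainTheorem2 (R : realType) (U : Type) (D : set U) (n : nat)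
  (hn : (1 <= n)%N)
  (dO : measure_display) (Omega : measurableType dO)
  (P : probability Omega R)
  (X : ('I_n -> U) -> Omega -> (R -> R))
  (XC : forall d w, C01 (X d w))
  (Xmeas : forall d A, C01_borel A -> measurable (X d @^-1` A))
  (eps delta : R) (heps : 0 <= eps) (hdelta0 : 0 <= delta) (hdelta1 : delta <= 1)
  (hfin : forall (k : nat) (t : 'I_k -> R), (1 <= k)%N ->
     (forall i, 0 <= t i <= 1) ->
     (forall i j : 'I_k, (i < j)%N -> t i < t j) ->
     forall d d', in_Dn D d -> in_Dn D d' -> neighbours d d' ->
     forall B, Rk_borel B ->
       (P ((proj_at t \o X d) @^-1` B)
          <= (expR eps)%:E * P ((proj_at t \o X d') @^-1` B) + delta%:E)%E) :
  forall d d', in_Dn D d -> in_Dn D d' -> neighbours d d' ->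
  forall A, C01_borel A ->
    (P (X d @^-1` A) <= (expR eps)%:E * P (X d' @^-1` A) + delta%:E)%E.
Proof.
move=> d d' Dd Dd' ndd; rewrite C01_borelE.
have mX e : forall A, <<s C01, cyl>> A -> measurable (X e @^-1` A).
  by move=> A; rewrite -C01_borelE; exact: Xmeas.
apply: (g_sigma_le_alg cyl_sub cyl0 cylCD cylU P _ _ (mX d) (mX d')).
  exact: expR_ge0.
apply: cyl_le_of_marginals (XC d) (XC d') _ _ _ => k t k0 t01 tinc.
exact: hfin.
Qed.
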